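(* Let $(R,+,\cdot)$ be a finite simple additively idempotent semiring with $|R|>2$ such that $(R,+)$ has a neutral element $0_R$, and let $(M,+)$ be a finite idempotent sub-irreducible $R$-semimodule. Then $(M,+)$ has a neutral element.
   Context: A semiring is a nonempty set with a commutative semigroup operation $+$ and a semigroup operation $\cdot$ satisfying both distributive laws; simple if its only congruences are the identity and the full relation; additively idempotent if $r+r=r$. An $R$-semimodule is a commutative semigroup $(M,+)$ with an action $R\times M\to M$ satisfying $r(sx)=(rs)x$, $(r+s)x=rx+sx$, $r(x+y)=rx+ry$; idempotent if $x+x=x$. A subsemimodule is a subsemigroup closed under the action. $M$ is quasitrivial if $rx=sx$ for all $r,s,x$; id-quasitrivial if $rx=x$ for all $r,x$; sub-irreducible if not quasitrivial and all proper subsemimodules are id-quasitrivial. *)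

From mathcomp Require Import all_boot.
Set Implicit Arguments. Unset Strict Implicit. Unset Printing Implicit Defensive.

Definition is_semiring (R : Type) (add mul : R -> R -> R) : Prop :=
  [/\ (forall a b c, add a (add b c) = add (add a b) c),
      (forall a b, add a b = add b a),
      (forall a b c, mul a (mul b c) = mul (mul a b) c),
      (forall a b c, mul a (add b c) = add (mul a b) (mul a c))
    & (forall a b c, mul (add a b) c = add (mul a c) (mul b c))].

Definition is_congruence (R : Type) (add mul : R -> R -> R) (rel : R -> R -> Prop) : Prop :=
  [/\ (forall a, rel a a),
      (forall a b, rel a b -> rel b a),
      (forall a b c, rel a b -> rel b c -> rel a c),
      (forall a b c d, rel a b -> rel c d -> rel (add a c) (add b d))
    & (forall a b c d, rel a b -> rel c d -> rel (mul a c) (mul b d))].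

Definition simple_semiring (R : Type) (add mul : R -> R -> R) : Prop :=
  forall rel, is_congruence add mul rel ->
    (forall a b, rel a b <-> a = b) \/ (forall a b, rel a b).

Definition add_idempotent (T : Type) (add : T -> T -> T) : Prop :=
  forall x, add x x = x.

Definition has_neutral (T : Type) (add : T -> T -> T) : Prop :=
  exists z, forall x, add z x = x /\ add x z = x.

Definition is_semimodule (R M : Type) (addR mulR : R -> R -> R)
    (addM : M -> M -> M) (act : R -> M -> M) : Prop :=
  [/\ (forall x y z, addM x (addM y z) = addM (addM x y) z),
      (forall x y, addM x y = addM y x),
      (forall r s x, act r (act s x) = act (mulR r s) x),
      (forall r s x, act (addR r s) x = addM (act r x) (act s x))
    & (forall r x y, act r (addM x y) = addM (act r x) (act r y))].

Definition is_subsemimodule (R M : Type) (addM : M -> M -> M) (act : R -> M -> M)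
    (S : M -> Prop) : Prop :=
  [/\ (exists x, S x),
      (forall x y, S x -> S y -> S (addM x y))
    & (forall r x, S x -> S (act r x))].

Definition quasitrivial (R M : Type) (act : R -> M -> M) : Prop :=
  forall r s x, act r x = act s x.

Definition id_quasitrivial_on (R M : Type) (act : R -> M -> M) (S : M -> Prop) : Prop :=
  forall r x, S x -> act r x = x.

Definition sub_irreducible (R M : Type) (addM : M -> M -> M) (act : R -> M -> M) : Prop :=
  ~ quasitrivial act /\
  forall S : M -> Prop, is_subsemimodule addM act S -> (exists x, ~ S x) ->
    id_quasitrivial_on act S.

From mathcomp Require Import all_boot.

Set Implicit Arguments. Unset Strict Implicit. Unset Printing Implicit Defensive.

(* If some x generates M as R x, then 0 x is neutral in M.  Otherwise every
   cyclic subsemimodule R x is proper, hence id-quasitrivial: (s r) x = r x for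
   all x.  The action is faithful (its kernel is a congruence which is not the
   full relation, as M is not quasitrivial), so s r = r in R.  Then "being 0"
   is a congruence, since an additively idempotent semiring is zero-sum free;
   by simplicity it is the identity or the full relation, and either way
   |R| <= 2. *)

Definition neutral (T : Type) (add : T -> T -> T) (z : T) : Prop :=
  forall x, add z x = x /\ add x z = x.

Definition cyclic_sub (R M : Type) (act : R -> M -> M) (x : M) (y : M) : Prop :=
  exists r, y = act r x.

Section Semiring.

Variables (R : Type) (addR mulR : R -> R -> R) (z : R).
Hypotheses (semiringR : is_semiring addR mulR) (idR : add_idempotent addR)
  (neutral_z : neutral addR z).

Lemma idempotent_zero_sum_free (a c : R) : addR a c = z -> a = z.
Proof.
case: semiringR => addA _ _ _ _ sum_eq_z.
have : addR a (addR a c) = addR a c by rewrite addA idR.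
by rewrite sum_eq_z (neutral_z a).2.
Qed.

Lemma zero_class_congruence :
  (forall t r, mulR t r = r) ->
  is_congruence addR mulR (fun a b => a = z <-> b = z).
Proof.
case: semiringR => _ addC _ _ _ mul_trivial.
have zero_sum a c : addR a c = z -> a = z /\ c = z.
  by move=> e; split; [apply: idempotent_zero_sum_free e |
                        rewrite addC in e; apply: idempotent_zero_sum_free e].
split=> [//|a b [] //|a b c [ab ba] [bc cb]|a b c d [ab ba] [cd dc]|a b c d _ cd].
- by split=> ?; auto.
- have z_add_z := (neutral_z z).1.
  by split=> /zero_sum[? ?]; [rewrite ab ?cd | rewrite ba ?dc].
- by rewrite !mul_trivial.
Qed.

End Semiring.

Lemma simple_zero_class_card_le2 (R : finType) (addR mulR : R -> R -> R) (z : R) :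
  simple_semiring addR mulR ->
  is_congruence addR mulR (fun a b => a = z <-> b = z) -> #|R| <= 2.
Proof.
move=> simpleR zero_cong.
suff nonzero_eq a b : a != z -> b != z -> a = b.
  have : #|[set~ z]| <= 1.
    by apply/card_le1_eqP => a b; rewrite !in_setC1 => az bz; apply: nonzero_eq.
  by rewrite cardsC1; case: #|R|.
move=> /negP az /negP bz.
case: (simpleR _ zero_cong) => [zero_class_eq | zero_class_full].
  by apply/zero_class_eq; split=> /eqP.
by case: az; apply/eqP/(zero_class_full a z).
Qed.

Section Semimodule.

Variables (R M : Type) (addR mulR : R -> R -> R) (addM : M -> M -> M)
  (act : R -> M -> M).
Hypothesis semimoduleM : is_semimodule addR mulR addM act.

Lemma neutral_of_generator (z : R) (x : M) :
  neutral addR z -> (forall m, exists r, act r x = m) ->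
  neutral addM (act z x).
Proof.
case: semimoduleM => _ addC _ act_add _ neutral_z generates m.
have [r <-] := generates m.
have zx_left : addM (act z x) (act r x) = act r x.
  by rewrite -act_add (neutral_z r).1.
by split; rewrite // addC.
Qed.

Lemma cyclic_subsemimodule (r0 : R) (x : M) :
  is_subsemimodule addM act (cyclic_sub act x).
Proof.
case: semimoduleM => _ _ act_mul act_add _.
split; first by exists (act r0 x), r0.
- by move=> _ _ [r1 ->] [r2 ->]; exists (addR r1 r2); rewrite act_add.
- by move=> r _ [s ->]; exists (mulR r s); rewrite act_mul.
Qed.

Lemma action_faithful (a b : R) :
  simple_semiring addR mulR -> ~ quasitrivial act ->
  (forall y, act a y = act b y) -> a = b.
Proof.
case: semimoduleM => _ _ act_mul act_add _ simpleR not_qt.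
have kernel : is_congruence addR mulR (fun a b => forall y, act a y = act b y).
  split=> // [c d e cd de y|c d e f cd ef y|c d e f cd ef y].
  - by rewrite cd de.
  - by rewrite !act_add cd ef.
  - by rewrite -!act_mul ef cd.
case: (simpleR _ kernel) => [kernel_eq | kernel_full].
  exact: (kernel_eq a b).1.
by case: not_qt => r s y; apply: kernel_full.
Qed.

Lemma mul_left_trivial :
  simple_semiring addR mulR -> ~ quasitrivial act ->
  (forall x, id_quasitrivial_on act (cyclic_sub act x)) ->
  forall t r, mulR t r = r.
Proof.
case: semimoduleM => _ _ act_mul _ _ simpleR not_qt cyclic_qt t r.
apply: action_faithful => // x; rewrite -act_mul.
by apply: cyclic_qt; exists r.
Qed.

End Semimodule.

Theorem proposition2p23 (R M : finType)
    (addR mulR : R -> R -> R) (addM : M -> M -> M) (act : R -> M -> M) :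
  is_semiring addR mulR ->
  simple_semiring addR mulR ->
  add_idempotent addR ->
  2 < #|R| ->
  has_neutral addR ->
  is_semimodule addR mulR addM act ->
  add_idempotent addM ->
  sub_irreducible addM act ->
  has_neutral addM.
Proof.
move=> semiringR simpleR idR cardR [z neutral_z] semimoduleM _ [not_qt sub_irr].
case: (boolP [exists x, [forall m, [exists r, act r x == m]]]).
  case/existsP=> x /forallP generates.
  exists (act z x); apply: (neutral_of_generator semimoduleM) => // m.
  by have /existsP[r /eqP] := generates m; exists r.
rewrite negb_exists => /forallP not_generator.
have cyclic_qt x : id_quasitrivial_on act (cyclic_sub act x).
  apply: sub_irr; first exact: cyclic_subsemimodule semimoduleM z x.
  move: (not_generator x); rewrite negb_forall => /existsP[m].
  rewrite negb_exists => /forallP missed.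
  by exists m => -[r mx]; move: (missed r); rewrite mx eqxx.
have mul_trivial := mul_left_trivial semimoduleM simpleR not_qt cyclic_qt.
have := simple_zero_class_card_le2 simpleR
  (zero_class_congruence semiringR idR neutral_z mul_trivial).
by rewrite leqNgt cardR.
Qed.
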